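(* Let $H$ be a Hopf algebra and $A$ an $H$-Galois object, and let $\mathcal{C}(A,H)$ be its Ehresmann–Schauenburg Hopf algebra. For every character $\phi$ of $\mathcal{C}(A,H)$ (equivalently, every bisection), $Ad_\phi=\mathrm{coinn}(\phi)$, i.e. for all $c\in\mathcal{C}(A,H)$, $$F_\phi(a)\otimes F_\phi(\tilde a)\big|_{c=a\otimes\tilde a}=\phi(c_{(1)})\,c_{(2)}\,\phi(S_{\mathcal C}(c_{(3)})),$$ where $Ad_\phi(a\otimes\tilde a):=F_\phi(a)\otimes F_\phi(\tilde a)$ and $F_\phi(a)=\phi(a_{(0)}\otimes a_{(1)}^{\langle1\rangle})\,a_{(1)}^{\langle2\rangle}$.
   Context: Algebras over $\mathbb{C}$; Sweedler notation with implicit summation. An $H$-Galois object is a right $H$-comodule algebra $A$ (coaction $\delta^A(a)=a_{(0)}\otimes a_{(1)}$) with coinvariants $A^{coH}=\mathbb{C}$ such that $\chi:A\otimes A\to A\otimes H$, $a'\otimes a\mapsto a'a_{(0)}\otimes a_{(1)}$, is bijective; $\tau(h)=\chi^{-1}(1\otimes h)=:h^{\langle1\rangle}\otimes h^{\langle2\rangle}$. $\mathcal{C}(A,H)=(A\otimes A)^{coH}=\{\sum a\otimes\tilde a:\sum a_{(0)}\otimes\tilde a_{(0)}\otimes a_{(1)}\tilde a_{(1)}=\sum a\otimes\tilde a\otimes1\}$ is a Hopf algebra with product $(a\otimes\tilde a)(a'\otimes\tilde a')=aa'\otimes\tilde a'\tilde a$, unit $1\otimes1$, coproduct $\Delta_{\mathcal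 C}(a\otimes\tilde a)=a_{(0)}\otimes a_{(1)}^{\langle1\rangle}\otimes a_{(1)}^{\langle2\rangle}\otimes\tilde a=:c_{(1)}\otimes c_{(2)}$ for $c=a\otimes\tilde a$, counit $\epsilon_{\mathcal C}(a\otimes\tilde a)=a\tilde a$, antipode $S_{\mathcal C}(a\otimes\tilde a)=\tilde a_{(0)}\otimes\tilde a_{(1)}^{\langle1\rangle}a\,\tilde a_{(1)}^{\langle2\rangle}$. A character is a unital algebra map $\phi:\mathcal{C}(A,H)\to\mathbb{C}$. For a character $\phi$ of a Hopf algebra $K$, $\mathrm{coinn}(\phi):K\to K$, $h\mapsto\phi(h_{(1)})h_{(2)}\phi(S(h_{(3)}))$. *)

(* MathComp has no tensor product of (possibly
   infinite-dimensional) vector spaces, so an element of U (x) V is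
   represented by a formal finite sum  sum_i u_i (x) v_i , i.e. a
   [seq (U * V)], and two formal sums are declared equal as tensors
   ([teq2]) when every bilinear map into every vector space takes the
   same value on them (universal property of the tensor product: this
   is exactly equality in U (x) V). *)
From HB Require Import structures.
From mathcomp Require Import all_boot all_algebra.
From mathcomp Require Import complex Rstruct.

Set Implicit Arguments.
Unset Strict Implicit.
Unset Printing Implicit Defensive.

Import GRing.Theory.
Local Open Scope ring_scope.

Definition CC : fieldType := complex.complex Rdefinitions.R.

Section Tensors.
Variable K : fieldType.

Definition lin (U M : lmodType K) (f : U -> M) : Prop :=
  forall a x y, f (a *: x + y) = a *: f x + f y.

Definition bil (U V M : lmodType K) (b : U -> V -> M) : Prop :=
  (forall v, lin (fun u => b u v)) /\ (forall u, lin (b u)).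

Definition tril (U V W M : lmodType K) (t : U -> V -> W -> M) : Prop :=
  [/\ forall v w, lin (fun u => t u v w),
      forall u w, lin (fun v => t u v w) &
      forall u v, lin (t u v)].

Definition quadril (U V W X M : lmodType K) (t : U -> V -> W -> X -> M) : Prop :=
  [/\ forall v w x, lin (fun u => t u v w x),
      forall u w x, lin (fun v => t u v w x),
      forall u v x, lin (fun w => t u v w x) &
      forall u v w, lin (t u v w)].

Definition teq2 (U V : lmodType K) (s t : seq (U * V)) : Prop :=
  forall (M : lmodType K) (b : U -> V -> M), bil b ->
    \sum_(p <- s) b p.1 p.2 = \sum_(p <- t) b p.1 p.2.

Definition teq3 (U V W : lmodType K) (s t : seq (U * V * W)) : Prop :=
  forall (M : lmodType K) (b : U -> V -> W -> M), tril b ->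
    \sum_(p <- s) b p.1.1 p.1.2 p.2 = \sum_(p <- t) b p.1.1 p.1.2 p.2.

Definition teq4 (U V W X : lmodType K) (s t : seq (U * V * W * X)) : Prop :=
  forall (M : lmodType K) (b : U -> V -> W -> X -> M), quadril b ->
    \sum_(p <- s) b p.1.1.1 p.1.1.2 p.1.2 p.2 =
    \sum_(p <- t) b p.1.1.1 p.1.1.2 p.1.2 p.2.

Definition tscale (U V : lmodType K) (a : K) (s : seq (U * V)) : seq (U * V) :=
  [seq (a *: p.1, p.2) | p <- s].

Record is_hopf (H : algType K) (Delta : H -> seq (H * H)) (eps : H -> K)
    (S : H -> H) : Prop := {
  hopf_Delta_lin : forall a x y,
    teq2 (Delta (a *: x + y)) (tscale a (Delta x) ++ Delta y);
  hopf_Delta_mul : forall x y,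
    teq2 (Delta (x * y)) [seq (p.1 * q.1, p.2 * q.2) | p <- Delta x, q <- Delta y];
  hopf_Delta_1 : teq2 (Delta 1) [:: (1, 1)];
  hopf_coassoc : forall x,
    teq3 [seq (q.1, q.2, p.2) | p <- Delta x, q <- Delta p.1]
         [seq (p.1, q.1, q.2) | p <- Delta x, q <- Delta p.2];
  hopf_eps_lin : forall a x y, eps (a *: x + y) = a * eps x + eps y;
  hopf_eps_mul : forall x y, eps (x * y) = eps x * eps y;
  hopf_eps_1 : eps 1 = 1;
  hopf_counitl : forall x, \sum_(p <- Delta x) eps p.1 *: p.2 = x;
  hopf_counitr : forall x, \sum_(p <- Delta x) eps p.2 *: p.1 = x;
  hopf_S_lin : forall a x y, S (a *: x + y) = a *: S x + S y;
  hopf_antipodel : forall x, \sum_(p <- Delta x) S p.1 * p.2 = (eps x)%:A;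
  hopf_antipoder : forall x, \sum_(p <- Delta x) p.1 * S p.2 = (eps x)%:A
}.

Section Galois.
Variables (H A : algType K) (Delta : H -> seq (H * H)) (eps : H -> K)
          (delta : A -> seq (A * H)).

Definition galois_map (s : seq (A * A)) : seq (A * H) :=
  [seq (p.1 * q.1, q.2) | p <- s, q <- delta p.2].

Record is_galois_object : Prop := {
  gal_delta_lin : forall a x y,
    teq2 (delta (a *: x + y)) (tscale a (delta x) ++ delta y);
  gal_delta_mul : forall x y,
    teq2 (delta (x * y)) [seq (p.1 * q.1, p.2 * q.2) | p <- delta x, q <- delta y];
  gal_delta_1 : teq2 (delta 1) [:: (1, 1)];
  gal_coassoc : forall x,
    teq3 [seq (q.1, q.2, p.2) | p <- delta x, q <- delta p.1]
         [seq (p.1, q.1, q.2) | p <- delta x, q <- Delta p.2];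
  gal_counit : forall x, \sum_(p <- delta x) eps p.2 *: p.1 = x;
  gal_coinv : forall x, teq2 (delta x) [:: (x, 1)] -> exists k : K, x = k%:A;
  gal_chi_inj : forall s t, teq2 (galois_map s) (galois_map t) -> teq2 s t;
  gal_chi_surj : forall u, exists s, teq2 (galois_map s) u
}.

Variable tau : H -> seq (A * A).  (* tau h = chi^{-1}(1 (x) h) *)

(* c is in C(A,H) = (A (x) A)^{coH} *)
Definition inES (c : seq (A * A)) : Prop :=
  teq3 (flatten [seq [seq (q.1, r.1, q.2 * r.2) | q <- delta p.1, r <- delta p.2]
                | p <- c])
       [seq (p.1, p.2, 1) | p <- c].

Definition ES_mul (c d : seq (A * A)) : seq (A * A) :=
  [seq (p.1 * q.1, q.2 * p.2) | p <- c, q <- d].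

Definition ES_unit : seq (A * A) := [:: (1, 1)].

Definition ES_coprod (c : seq (A * A)) : seq (A * A * A * A) :=
  flatten [seq [seq (q.1, r.1, r.2, p.2) | q <- delta p.1, r <- tau q.2] | p <- c].

Definition ES_antipode (c : seq (A * A)) : seq (A * A) :=
  flatten [seq [seq (q.1, r.1 * p.1 * r.2) | q <- delta p.2, r <- tau q.2] | p <- c].

(* phi : C(A,H) -> K is a character (unital algebra map); phi is given on
   representatives and only its behaviour on C(A,H) matters. *)
Record is_character (phi : seq (A * A) -> K) : Prop := {
  char_welldef : forall c d, inES c -> teq2 c d -> phi c = phi d;
  char_lin : forall a c d, inES c -> inES d -> phi (tscale a c ++ d) = a * phi c + phi d;
  char_mul : forall c d, inES c -> inES d -> phi (ES_mul c d) = phi c * phi d;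
  char_unit : phi ES_unit = 1
}.

(* y = (phi (x) id)(T) for T in C(A,H) (x) A, computed through a
   decomposition T = sum_j c_j (x) x_j with c_j in C(A,H) *)
Definition phi_id (phi : seq (A * A) -> K) (T : seq (A * A * A)) (y : A) : Prop :=
  exists D : seq (seq (A * A) * A),
    [/\ {in D, forall d, inES d.1},
        teq3 T (flatten [seq [seq (q.1, q.2, d.2) | q <- d.1] | d <- D]) &
        y = \sum_(d <- D) phi d.1 *: d.2].

Definition Fphi_spec (phi : seq (A * A) -> K) (F : A -> A) : Prop :=
  forall a, phi_id phi
    (flatten [seq [seq (p.1, q.1, q.2) | q <- tau p.2] | p <- delta a]) (F a).

Definition Ad (F : A -> A) (c : seq (A * A)) : seq (A * A) :=
  [seq (F p.1, F p.2) | p <- c].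

Definition decompCC (X : seq (A * A * A * A)) (D : seq (seq (A * A) * seq (A * A)))
    : Prop :=
  {in D, forall d, inES d.1 /\ inES d.2} /\
  teq4 X (flatten [seq [seq (u.1, u.2, v.1, v.2) | u <- d.1, v <- d.2] | d <- D]).

(* Y = coinn(phi)(c) = phi(c_(1)) c_(2) phi(S_C(c_(3))), computed as
   (phi (x) ((id (x) phi o S_C) o Delta_C)) (Delta_C c), using decompositions
   Delta_C c = sum_j d_j (x) e_j  and  Delta_C e_j = sum_k f_jk (x) g_jk
   in C(A,H) (x) C(A,H):
   Y = sum_j phi(d_j) sum_k phi(S_C g_jk) f_jk. *)
Definition coinn_val (phi : seq (A * A) -> K) (c Y : seq (A * A)) : Prop :=
  exists D : seq (seq (A * A) * seq (A * A) * seq (seq (A * A) * seq (A * A))),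
    [/\ decompCC (ES_coprod c) [seq x.1 | x <- D],
        {in D, forall x, decompCC (ES_coprod x.1.2) x.2} &
        teq2 Y (flatten [seq tscale (phi x.1.1)
                   (flatten [seq tscale (phi (ES_antipode g.2)) g.1 | g <- x.2])
                 | x <- D])].

End Galois.
End Tensors.

(* The character phi is only defined on C(A,H), inside A (x) A.
   Choose a linear functional f on A with f 1 = 1 (Zorn) and put
   P(x, y) = x_(0) (x) x_(1)<1> f(x_(1)<2> y).  Then P is a bilinear map
   A x A -> C(A,H) restricting to the identity on C(A,H), so
   Phi(x, y) = phi(P(x, y)) is a bilinear form extending phi.
   In terms of Phi one has F_phi(x) = Phi(x_(0), x_(1)<1>) x_(1)<2> and
   phi(S_C(x (x) y)) = Phi(y_(0), y_(1)<1> x y_(1)<2>).  Expanding Delta_C with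
   the same identities gives (id (x) phi S_C) Delta_C = id (x) F_phi on C(A,H);
   applying phi (x) id to Delta_C once more yields F_phi(a) (x) F_phi(a~).
   Tensors are formal sums, so every identity is stated after applying an
   arbitrary multilinear test map. *)

From Pilot Require Import Defs.
From HB Require Import structures.
From mathcomp Require Import all_boot all_algebra.
From mathcomp Require Import complex Rstruct.
From mathcomp Require Import boolp classical_sets.

Set Implicit Arguments.
Unset Strict Implicit.
Unset Printing Implicit Defensive.

Import GRing.Theory.
Local Open Scope ring_scope.

Lemma scaleCCE (a z : CC) : a *: z = a * z. Proof. by []. Qed.

Section LinearMaps.
Implicit Types (U V W X M : lmodType CC).

Lemma linD U M (f : U -> M) : lin f -> forall x y, f (x + y) = f x + f y.
Proof. by move=> hf x y; rewrite -[x in LHS]scale1r hf scale1r. Qed.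

Lemma lin0 U M (f : U -> M) : lin f -> f 0 = 0.
Proof. by move=> hf; apply: (addrI (f 0)); rewrite -linD // !addr0. Qed.

Lemma linZ U M (f : U -> M) : lin f -> forall a x, f (a *: x) = a *: f x.
Proof. by move=> hf a x; rewrite -[a *: x]addr0 hf lin0 // addr0. Qed.

Lemma lin_sum U M (f : U -> M) : lin f ->
  forall I (s : seq I) F, f (\sum_(i <- s) F i) = \sum_(i <- s) f (F i).
Proof.
move=> hf I s F; elim: s => [|i s IH]; first by rewrite !big_nil lin0.
by rewrite !big_cons linD // IH.
Qed.

Lemma lin_id U : lin (fun x : U => x).
Proof. by []. Qed.

Lemma lin_comp U V M (L : U -> V) (f : V -> M) : lin L -> lin f -> lin (fun x => f (L x)).
Proof. by move=> hL hf a x y; rewrite hL hf. Qed.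

Lemma lin_fsum U M I (s : seq I) (F : I -> U -> M) :
  (forall i, lin (F i)) -> lin (fun x => \sum_(i <- s) F i x).
Proof.
move=> hF a x y; rewrite scaler_sumr -big_split /=; apply: eq_bigr => i _; exact: hF.
Qed.

Lemma lin_fadd U M (f g : U -> M) : lin f -> lin g -> lin (fun x => f x + g x).
Proof. by move=> hf hg a x y; rewrite hf hg scalerDr addrACA. Qed.

Lemma lin_fscale U M (c : CC) (f : U -> M) : lin f -> lin (fun x => c *: f x).
Proof. by move=> hf a x y; rewrite hf scalerDr !scalerA mulrC. Qed.

Lemma lin_fscalel U M (p : U -> CC) (m : M) : lin p -> lin (fun x => p x *: m).
Proof. by move=> hp a x y; rewrite hp scalerDl scalerA. Qed.

Lemma lin_fmulr U (p : U -> CC) (c : CC) : lin p -> lin (fun x => p x * c).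
Proof. by move=> hp a x y; rewrite hp mulrDl !scaleCCE mulrA. Qed.

Lemma lin_fmull U (p : U -> CC) (c : CC) : lin p -> lin (fun x => c * p x).
Proof. by move=> hp a x y; rewrite hp mulrDr !scaleCCE mulrCA. Qed.

Lemma lin_mull (B : algType CC) (u : B) : lin (fun x => u * x).
Proof. by move=> a x y; rewrite mulrDr scalerAr. Qed.

Lemma lin_mulr (B : algType CC) (u : B) : lin (fun x => x * u).
Proof. by move=> a x y; rewrite mulrDl scalerAl. Qed.

Lemma lin_mull_comp (B : algType CC) U (L : U -> B) (u : B) : lin L -> lin (fun x => u * L x).
Proof. by move=> hL; exact: lin_comp hL (lin_mull u). Qed.

Lemma lin_mulr_comp (B : algType CC) U (L : U -> B) (u : B) : lin L -> lin (fun x => L x * u).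
Proof. by move=> hL; exact: lin_comp hL (lin_mulr u). Qed.

Section Multilinear.
Variable T : lmodType CC.

Lemma bil_comp1 U V M (b : U -> V -> M) (L : T -> U) v :
  bil b -> lin L -> lin (fun x => b (L x) v).
Proof. by case=> h _ hL; exact: lin_comp hL (h v). Qed.

Lemma bil_comp2 U V M (b : U -> V -> M) (L : T -> V) u :
  bil b -> lin L -> lin (fun x => b u (L x)).
Proof. by case=> _ h hL; exact: lin_comp hL (h u). Qed.

Lemma tril_comp1 U V W M (b : U -> V -> W -> M) (L : T -> U) v w :
  tril b -> lin L -> lin (fun x => b (L x) v w).
Proof. by case=> h _ _ hL; exact: lin_comp hL (h v w). Qed.

Lemma tril_comp2 U V W M (b : U -> V -> W -> M) (L : T -> V) u w :
  tril b -> lin L -> lin (fun x => b u (L x) w).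
Proof. by case=> _ h _ hL; exact: lin_comp hL (h u w). Qed.

Lemma tril_comp3 U V W M (b : U -> V -> W -> M) (L : T -> W) u v :
  tril b -> lin L -> lin (fun x => b u v (L x)).
Proof. by case=> _ _ h hL; exact: lin_comp hL (h u v). Qed.

Lemma quadril_comp1 U V W X M (b : U -> V -> W -> X -> M) (L : T -> U) v w y :
  quadril b -> lin L -> lin (fun x => b (L x) v w y).
Proof. by case=> h _ _ _ hL; exact: lin_comp hL (h v w y). Qed.

Lemma quadril_comp2 U V W X M (b : U -> V -> W -> X -> M) (L : T -> V) u w y :
  quadril b -> lin L -> lin (fun x => b u (L x) w y).
Proof. by case=> _ h _ _ hL; exact: lin_comp hL (h u w y). Qed.

Lemma quadril_comp3 U V W X M (b : U -> V -> W -> X -> M) (L : T -> W) u v y :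
  quadril b -> lin L -> lin (fun x => b u v (L x) y).
Proof. by case=> _ _ h _ hL; exact: lin_comp hL (h u v y). Qed.

Lemma quadril_comp4 U V W X M (b : U -> V -> W -> X -> M) (L : T -> X) u v w :
  quadril b -> lin L -> lin (fun x => b u v w (L x)).
Proof. by case=> _ _ _ h hL; exact: lin_comp hL (h u v w). Qed.

End Multilinear.

Lemma bil_lin2 U V M (b : U -> V -> M) u : bil b -> lin (b u).
Proof. by case=> _ h; exact: h. Qed.

Lemma tril_lin3 U V W M (b : U -> V -> W -> M) u v : tril b -> lin (b u v).
Proof. by case=> _ _ h; exact: h. Qed.

Lemma quadril_lin4 U V W X M (b : U -> V -> W -> X -> M) u v w : quadril b -> lin (b u v w).
Proof. by case=> _ _ _ h; exact: h. Qed.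

End LinearMaps.

Ltac lin_factor :=
  repeat first [ exact: lin_id | apply: lin_mull_comp | apply: lin_mulr_comp ].

Ltac lin_leaf :=
  first [ apply: bil_comp1; [assumption | lin_factor]
        | apply: bil_comp2; [assumption | lin_factor]
        | apply: tril_comp1; [assumption | lin_factor]
        | apply: tril_comp2; [assumption | lin_factor]
        | apply: tril_comp3; [assumption | lin_factor]
        | apply: quadril_comp1; [assumption | lin_factor]
        | apply: quadril_comp2; [assumption | lin_factor]
        | apply: quadril_comp3; [assumption | lin_factor]
        | apply: quadril_comp4; [assumption | lin_factor]
        | apply: bil_lin2; assumption
        | apply: tril_lin3; assumption
        | apply: quadril_lin4; assumption
        | assumption
        | match goal with h : _ |- _ => apply: h end
        | match goal with
          | |- lin (fun x => ?f (@?L x, ?b)) =>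
              apply: (@lin_comp _ _ _ L (fun z => f (z, b)))
          | |- lin (fun x => ?f (?a, @?L x)) =>
              apply: (@lin_comp _ _ _ L (fun z => f (a, z)))
          | |- lin (fun x => ?f (@?L x)) =>
              apply: (@lin_comp _ _ _ L f)
          | |- lin (fun x => ?f (@?L x) ?e) =>
              apply: (@lin_comp _ _ _ L (fun z => f z e))
          | |- lin (fun x => ?f (@?L x) ?e1 ?e2) =>
              apply: (@lin_comp _ _ _ L (fun z => f z e1 e2))
          end; [lin_factor | match goal with h : _ |- _ => apply: h end] ].

Section FormalTensors.
Implicit Types (U V W X M : lmodType CC).

Lemma teq2E U V (s t : seq (U * V)) : teq2 s t ->
  forall M (G : U * V -> M), bil (fun u v => G (u, v)) ->
  \sum_(p <- s) G p = \sum_(p <- t) G p.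
Proof.
move=> h M G hG; have := h M _ hG.
have E p : G (p.1, p.2) = G p by case: p.
by rewrite (eq_bigr _ (fun p _ => E p)) [in X in _ = X -> _](eq_bigr _ (fun p _ => E p)).
Qed.

Lemma teq2I U V (s t : seq (U * V)) :
  (forall M (G : U * V -> M), bil (fun u v => G (u, v)) ->
     \sum_(p <- s) G p = \sum_(p <- t) G p) -> teq2 s t.
Proof. by move=> h M b hb; exact: (h M (fun p => b p.1 p.2)). Qed.

Lemma teq4I U V W X (s t : seq (U * V * W * X)) :
  (forall M (G : U * V * W * X -> M), quadril (fun u v w x => G (u, v, w, x)) ->
     \sum_(p <- s) G p = \sum_(p <- t) G p) -> teq4 s t.
Proof. by move=> h M b hb; exact: (h M (fun p => b p.1.1.1 p.1.1.2 p.1.2 p.2)). Qed.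

Lemma sum_tscale U V M (a : CC) (s : seq (U * V)) (G : U * V -> M) :
  (forall v, lin (fun u => G (u, v))) ->
  \sum_(p <- tscale a s) G p = a *: \sum_(p <- s) G p.
Proof.
move=> hG; rewrite big_map scaler_sumr; apply: eq_bigr => p _.
by rewrite (linZ (hG p.2)); case: p.
Qed.

Lemma tscale1 U V (s : seq (U * V)) : tscale 1 s = s.
Proof. by rewrite /tscale (eq_map (g := id)) ?map_id // => -[u v] /=; rewrite scale1r. Qed.

End FormalTensors.

Section LinearFunctional.
Local Open Scope classical_set_scope.
Variables (V : lmodType CC) (v : V).

Definition subspace (K : set V) := forall a x y, K x -> K y -> K (a *: x + y).

Lemma maximal_subspace_avoiding : exists K, [/\ subspace K, ~ K v &
  forall B, K `<` B -> subspace B -> B v].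
Proof.
have [K [[Ksub Kv] Kmax]] : exists K, (subspace K /\ ~ K v) /\
    forall B, K `<` B -> ~ (subspace B /\ ~ B v).
  apply: Zorn_bigcup => Fm FP Ftot; split.
  - move=> a x y [X FX Xx] [Y FY Yy].
    have [XY|YX] := Ftot _ _ FX FY.
    + by exists Y => //; apply: (proj1 (FP _ FY)) => //; exact: XY.
    + by exists X => //; apply: (proj1 (FP _ FX)) => //; exact: YX.
  - by move=> [X FX Xv]; exact: (proj2 (FP _ FX)).
exists K; split=> // B KB Bsub; apply: contrapT => Bv; exact: Kmax KB (conj Bsub Bv).
Qed.

Hypothesis v_neq0 : v != 0.

Section MaximalSubspace.
Variable K : set V.
Hypotheses (Ksub : subspace K) (Kv : ~ K v) (Kmax : forall B, K `<` B -> subspace B -> B v).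

Lemma maximal_subspace0 : K 0.
Proof.
have [k Kk] : exists k, K k.
  apply: contrapT => K0; move/eqP: v_neq0; apply; apply: (Kmax (B := [set 0])).
    split; first by move=> x /= Kx; case: K0; exists x.
    by move=> /(_ 0 erefl) K_0; apply: K0; exists 0.
  by move=> a x y /= -> ->; rewrite scaler0 addr0.
by have := Ksub (-1) Kk Kk; rewrite scaleN1r addNr.
Qed.

Lemma maximal_subspaceZ a x : K x -> K (a *: x).
Proof. by move=> Kx; have := Ksub a Kx maximal_subspace0; rewrite addr0. Qed.

Lemma maximal_subspaceB x y : K x -> K y -> K (x - y).
Proof.
by move=> Kx Ky; have := Ksub 1 Kx (maximal_subspaceZ (-1) Ky); rewrite scale1r scaleN1r.
Qed.

Lemma maximal_subspace_line x : exists l : CC, K (x - l *: v).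
Proof.
apply: contrapT => nex.
pose B := [set y | exists k m, K k /\ y = k + m *: x].
have /= [k [m [Kk Ev]]] : B v.
  apply: Kmax.
  - split; first by move=> y /= Ky; exists y, 0; rewrite scale0r addr0.
    move=> BK; apply: nex; exists 0; rewrite scale0r subr0; apply: BK.
    by exists 0, 1; rewrite scale1r add0r; split=> //; exact: maximal_subspace0.
  - move=> a y z [k [m [Kk ->]]] [k' [m' [Kk' ->]]].
    exists (a *: k + k'), (a * m + m'); split; first exact: Ksub.
    by rewrite scalerDr scalerA scalerDl addrACA.
have [m0|mn0] := eqVneq m 0; first by apply: Kv; rewrite Ev m0 scale0r addr0.
apply: nex; exists m^-1.
have -> : x - m^-1 *: v = 0 - m^-1 *: k.
  by rewrite Ev scalerDr scalerA mulVf // scale1r opprD addrCA subrr addr0 add0r.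
exact/maximal_subspaceB/maximal_subspaceZ/Kk/maximal_subspace0.
Qed.

Lemma maximal_subspace_line_uniq x l m : K (x - l *: v) -> K (x - m *: v) -> l = m.
Proof.
move=> Kl Km; apply/eqP; apply: contraT => lm.
have : (m - l) *: v = (x - l *: v) - (x - m *: v).
  by rewrite scalerBl opprB [RHS]addrC [RHS]addrA subrK.
move=> /(congr1 (fun y => (m - l)^-1 *: y)); rewrite scalerA mulVf; last first.
  by rewrite subr_eq0 eq_sym.
rewrite scale1r => Ev; case: Kv; rewrite Ev.
exact/maximal_subspaceZ/maximal_subspaceB.
Qed.

End MaximalSubspace.

Lemma exists_lin_functional : exists f : V -> CC, lin f /\ f v = 1.
Proof.
have [K [Ksub Kv Kmax]] := maximal_subspace_avoiding.
have uniq := maximal_subspace_line_uniq Ksub Kv Kmax.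
pose f x := sval (cid (maximal_subspace_line Ksub Kv Kmax x)).
have fP x : K (x - f x *: v) by rewrite /f; case: cid.
exists f; split.
  move=> a x y; apply: (uniq _ _ _ (fP (a *: x + y))).
  have -> : a *: x + y - (a *: f x + f y) *: v = a *: (x - f x *: v) + (y - f y *: v).
    by rewrite scalerDl scalerBr scalerA opprD addrACA.
  exact: (Ksub).
apply: esym; apply: (uniq _ _ _ _ (fP v)); rewrite scale1r subrr.
exact: maximal_subspace0 Ksub Kmax.
Qed.

End LinearFunctional.

Section GaloisObject.
Variables (H A : algType CC) (Delta : H -> seq (H * H)) (eps : H -> CC)
    (S : H -> H) (delta : A -> seq (A * H)) (tau : H -> seq (A * A)).
Hypothesis hH : is_hopf Delta eps S.
Hypothesis hG : is_galois_object Delta eps delta.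
Hypothesis htau : forall h, teq2 (galois_map delta (tau h)) [:: (1, h)].

Section Sums.
Variable M : lmodType CC.

Lemma lin_sum_delta (G : A * H -> M) : bil (fun u h => G (u, h)) ->
  lin (fun x => \sum_(q <- delta x) G q).
Proof.
move=> hb a x y; rewrite (teq2E (gal_delta_lin hG a x y) hb) big_cat sum_tscale //.
by case: hb.
Qed.

Lemma lin_sum_Delta (G : H * H -> M) : bil (fun u h => G (u, h)) ->
  lin (fun x => \sum_(q <- Delta x) G q).
Proof.
move=> hb a x y; rewrite (teq2E (hopf_Delta_lin hH a x y) hb) big_cat sum_tscale //.
by case: hb.
Qed.

Lemma sum_galois_map (s : seq (A * A)) (G : A * H -> M) :
  \sum_(p <- galois_map delta s) G p =
  \sum_(p <- s) \sum_(q <- delta p.2) G (p.1 * q.1, q.2).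
Proof. exact: big_allpairs_dep. Qed.

Lemma chi_tau (g : A -> H -> M) u h : bil g ->
  \sum_(r <- tau h) \sum_(q <- delta r.2) g (u * (r.1 * q.1)) q.2 = g u h.
Proof.
case=> g1 g2; have := teq2E (htau h) (G := fun p => g (u * p.1) p.2).
rewrite sum_galois_map big_seq1 /= mulr1 => -> //.
by split=> [v|w]; [apply: lin_comp (g1 v); exact: lin_mull | exact: g2].
Qed.

Lemma chi_tau1 (g : A -> H -> M) h : bil g ->
  \sum_(r <- tau h) \sum_(q <- delta r.2) g (r.1 * q.1) q.2 = g 1 h.
Proof.
move=> hg; rewrite -(chi_tau 1 h hg).
by apply: eq_bigr => r _; apply: eq_bigr => q _; rewrite mul1r.
Qed.

End Sums.

Lemma lin_sum_tau (M : lmodType CC) (G : A * A -> M) : bil (fun u v => G (u, v)) ->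
  lin (fun h => \sum_(r <- tau h) G r).
Proof.
move=> hb a x y.
have tauD : teq2 (tau (a *: x + y)) (tscale a (tau x) ++ tau y).
  apply: (gal_chi_inj hG); apply: teq2I => M' G' [g1 g2].
  have chi_tauG h := chi_tau1 h (g := fun u k => G' (u, k)) (conj g1 g2).
  rewrite /galois_map allpairs_cat big_cat !sum_galois_map chi_tauG big_map /=.
  rewrite (eq_bigr (fun r => a *: \sum_(q <- delta r.2) G' (r.1 * q.1, q.2))); last first.
    move=> r _; rewrite scaler_sumr; apply: eq_bigr => q _.
    by rewrite -scalerAl (linZ (g1 _)).
  by rewrite -scaler_sumr !chi_tauG g2.
by rewrite (teq2E tauD hb) big_cat sum_tscale //; case: hb.
Qed.

Lemma tau_chi (M : lmodType CC) (g : A -> A -> M) u v : bil g ->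
  g u v = \sum_(q <- delta v) \sum_(r <- tau q.2) g (u * q.1 * r.1) r.2.
Proof.
move=> hg.
have chiK : teq2 [seq (u * q.1 * r.1, r.2) | q <- delta v, r <- tau q.2] [:: (u, v)].
  apply: (gal_chi_inj hG); apply: teq2I => M' G' [g1 g2].
  rewrite !sum_galois_map big_seq1 /= big_allpairs_dep /=.
  apply: eq_bigr => q _.
  rewrite -(chi_tau (g := fun a k => G' (a, k)) (u * q.1) q.2 (conj g1 g2)).
  by apply: eq_bigr => r _; apply: eq_bigr => q' _; rewrite !mulrA.
have := teq2E chiK (G := fun p => g p.1 p.2).
by rewrite big_seq1 big_allpairs_dep => -> //; case: hg.
Qed.

Section LinearComposites.
Variables (M T : lmodType CC).

Lemma lin_sum_delta_comp (L : T -> A) (G : A * H -> M) : lin L -> bil (fun u h => G (u, h)) ->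
  lin (fun x => \sum_(q <- delta (L x)) G q).
Proof. by move=> hL hb; exact: lin_comp hL (lin_sum_delta hb). Qed.

Lemma lin_sum_Delta_comp (L : T -> H) (G : H * H -> M) : lin L -> bil (fun u h => G (u, h)) ->
  lin (fun x => \sum_(q <- Delta (L x)) G q).
Proof. by move=> hL hb; exact: lin_comp hL (lin_sum_Delta hb). Qed.

Lemma lin_sum_tau_comp (L : T -> H) (G : A * A -> M) : lin L -> bil (fun u h => G (u, h)) ->
  lin (fun x => \sum_(q <- tau (L x)) G q).
Proof. by move=> hL hb; exact: lin_comp hL (lin_sum_tau hb). Qed.

End LinearComposites.

Ltac solve_lin :=
  repeat match goal with
  | |- bil _ => split => ? /=
  | |- tril _ => split => ? ? /=
  | |- quadril _ => split => ? ? ? /=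
  | |- forall _, _ => intro
  | |- lin _ => first [ apply: lin_fsum => ? /=
                       | apply: lin_sum_delta_comp; [lin_factor | ]
                       | apply: lin_sum_Delta_comp; [lin_factor | ]
                       | apply: lin_sum_tau_comp; [lin_factor | ]
                       | apply: lin_fadd
                       | apply: lin_fscale
                       | apply: lin_fscalel
                       | apply: lin_fmulr | apply: lin_fmull
                       | lin_leaf ]
  end.

Lemma lin_eps : lin eps.
Proof. by move=> a x y; rewrite (hopf_eps_lin hH). Qed.

Lemma lin_S : lin S.
Proof. by move=> a x y; rewrite (hopf_S_lin hH). Qed.

Section Identities.
Variable M : lmodType CC.

Lemma tau_chi3 (X : lmodType CC) (g : A -> A -> X -> M) u v w : tril g ->
  g u v w = \sum_(q <- delta v) \sum_(r <- tau q.2) g (u * q.1 * r.1) r.2 w.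
Proof.
by case=> g1 g2 _; apply: (tau_chi (g := fun a b => g a b w)); split=> *; [apply: g1 | apply: g2].
Qed.

Lemma delta_coassoc (T : A -> H -> H -> M) y : tril T ->
  \sum_(q <- delta y) \sum_(q' <- delta q.1) T q'.1 q'.2 q.2 =
  \sum_(q <- delta y) \sum_(p <- Delta q.2) T q.1 p.1 p.2.
Proof. by move=> hT; have := gal_coassoc hG y hT; rewrite !big_allpairs_dep. Qed.

Lemma Delta_coassoc (T : H -> H -> H -> M) y : tril T ->
  \sum_(q <- Delta y) \sum_(q' <- Delta q.1) T q'.1 q'.2 q.2 =
  \sum_(q <- Delta y) \sum_(p <- Delta q.2) T q.1 p.1 p.2.
Proof. by move=> hT; have := hopf_coassoc hH y hT; rewrite !big_allpairs_dep. Qed.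

Lemma delta1 (g : A -> H -> M) : bil g -> \sum_(q <- delta 1) g q.1 q.2 = g 1 1.
Proof. by move=> hg; have := gal_delta_1 hG hg; rewrite big_seq1. Qed.

Lemma deltaM (g : A -> H -> M) x y : bil g ->
  \sum_(q <- delta (x * y)) g q.1 q.2 =
  \sum_(q <- delta x) \sum_(q' <- delta y) g (q.1 * q'.1) (q.2 * q'.2).
Proof. by move=> hg; have := gal_delta_mul hG x y hg; rewrite big_allpairs_dep. Qed.

Lemma delta_counit (g : A -> M) x : lin g -> \sum_(q <- delta x) eps q.2 *: g q.1 = g x.
Proof.
move=> hg; rewrite -[in RHS](gal_counit hG x) (lin_sum hg); apply: eq_bigr => q _.
by rewrite (linZ hg).
Qed.

Lemma Delta_counitl (g : H -> M) x : lin g -> \sum_(q <- Delta x) eps q.1 *: g q.2 = g x.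
Proof.
move=> hg; rewrite -[in RHS](hopf_counitl hH x) (lin_sum hg); apply: eq_bigr => q _.
by rewrite (linZ hg).
Qed.

Lemma Delta_antipode_cancel (Z : H -> H -> M) y : bil Z ->
  \sum_(m <- Delta y) \sum_(n <- Delta m.2) Z (m.1 * S n.1) n.2 = Z 1 y.
Proof.
move=> hZ; have [z1 z2] := hZ; have lS := lin_S.
rewrite -(Delta_coassoc (T := fun a b d => Z (a * S b) d)); last by solve_lin.
transitivity (\sum_(m <- Delta y) eps m.1 *: Z 1 m.2).
  by apply: eq_bigr => m _; rewrite -(lin_sum (z1 _)) (hopf_antipoder hH) (linZ (z1 _)).
by rewrite (Delta_counitl (g := Z 1)).
Qed.

Lemma Delta_antipode_cancel_mulr (W : H -> H -> M) y c : bil W ->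
  \sum_(p <- Delta y) \sum_(p' <- Delta p.2) W p'.2 (c * p.1 * S p'.1) = W y c.
Proof.
move=> hW; have [w1 w2] := hW; have lS := lin_S.
rewrite -(Delta_coassoc (T := fun a b d => W d (c * a * S b))); last by solve_lin.
transitivity (\sum_(p <- Delta y) eps p.1 *: W p.2 c).
  apply: eq_bigr => p _; have hl : lin (fun z => W p.2 (c * z)) by solve_lin.
  under eq_bigr do rewrite -mulrA.
  by rewrite -(lin_sum hl) (hopf_antipoder hH) -scalerAr mulr1 (linZ (w2 _)).
by rewrite (Delta_counitl (g := W^~ c)) //; solve_lin.
Qed.

Lemma tau_coaction_r (G : A -> A -> H -> M) h : tril G ->
  \sum_(r <- tau h) \sum_(q <- delta r.2) G r.1 q.1 q.2 =
  \sum_(p <- Delta h) \sum_(r <- tau p.1) G r.1 r.2 p.2.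
Proof.
move=> hG3.
pose K x k l := \sum_(r' <- tau k) G (x * r'.1) r'.2 l.
have hK : tril K by rewrite /K; solve_lin.
transitivity (\sum_(p <- Delta h) K 1 p.1 p.2).
  transitivity (\sum_(r <- tau h) \sum_(q <- delta r.2) \sum_(p <- Delta q.2)
      K (r.1 * q.1) p.1 p.2).
    apply: eq_bigr => r _; rewrite -(delta_coassoc (T := fun x k l => K (r.1 * x) k l));
      last by solve_lin.
    by apply: eq_bigr => q _; rewrite (tau_chi3 r.1 q.1 q.2 hG3).
  by apply: (chi_tau1 (g := fun x k => \sum_(p <- Delta k) K x p.1 p.2)); solve_lin.
apply: eq_bigr => p _; rewrite -(chi_tau1 (g := fun x k => K x k p.2)); last by solve_lin.
by apply: eq_bigr => r _; rewrite (tau_chi3 r.1 r.2 p.2 hG3).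
Qed.

Lemma tau_Delta (G : A -> A -> A -> M) h : tril G ->
  \sum_(p <- Delta h) \sum_(r <- tau p.1) \sum_(s <- tau p.2) G r.1 (r.2 * s.1) s.2 =
  \sum_(r <- tau h) G r.1 1 r.2.
Proof.
move=> hG3; have [g1 g2 g3] := hG3.
pose K x y k := \sum_(r' <- tau k) G x (y * r'.1) r'.2.
have hK : tril K by rewrite /K; solve_lin.
have E x y z : G x y z = \sum_(q <- delta z) K x (y * q.1) q.2.
  by rewrite (tau_chi (g := G x) y z).
transitivity (\sum_(p <- Delta h) \sum_(r <- tau p.1) K r.1 (r.2 * 1) p.2).
  apply: eq_bigr => p _; apply: eq_bigr => r _.
  rewrite -(chi_tau1 (g := fun x k => K r.1 (r.2 * x) k)); last by solve_lin.
  by apply: eq_bigr => s _; rewrite E; apply: eq_bigr => q _; rewrite mulrA.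
transitivity (\sum_(r <- tau h) \sum_(q <- delta r.2) K r.1 (1 * q.1) q.2).
  rewrite (tau_coaction_r (G := fun a b k => K a (1 * b) k)); last by solve_lin.
  by apply: eq_bigr => p _; apply: eq_bigr => r _; rewrite mulr1 mul1r.
by apply: eq_bigr => r _; rewrite E.
Qed.

End Identities.

Lemma tau_mul h : \sum_(r <- tau h) r.1 * r.2 = eps h *: 1.
Proof.
have leps := lin_eps.
transitivity (\sum_(r <- tau h) \sum_(q <- delta r.2) eps q.2 *: (r.1 * q.1)).
  by apply: eq_bigr => r _; rewrite (delta_counit (g := fun z => r.1 * z)) //; exact: lin_mull.
by apply: (chi_tau1 (g := fun x k => eps k *: x)); solve_lin.
Qed.

Section TranslationCoaction.
Variable M : lmodType CC.

Lemma tau_coaction_mul (T : A -> H -> H -> M) h : tril T ->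
  \sum_(r <- tau h) \sum_(q <- delta r.1) \sum_(q' <- delta r.2) \sum_(p <- Delta q'.2)
     T (q.1 * q'.1) (q.2 * p.1) p.2 = T 1 1 h.
Proof.
move=> hT; have [t1 t2 t3] := hT.
pose Y x a k l := \sum_(q <- delta x) T (q.1 * a) (q.2 * k) l.
have hY : quadril Y by rewrite /Y; solve_lin.
transitivity (\sum_(r <- tau h) \sum_(q' <- delta r.2) \sum_(q'' <- delta q'.1)
    Y r.1 q''.1 q''.2 q'.2).
  apply: eq_bigr => r _; rewrite exchange_big /=.
  rewrite (delta_coassoc (T := Y r.1)); last by solve_lin.
  by apply: eq_bigr => q' _; rewrite /Y exchange_big.
rewrite (tau_coaction_r (G := fun x y k => \sum_(q'' <- delta y) Y x q''.1 q''.2 k));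
  last by solve_lin.
transitivity (\sum_(p <- Delta h) eps p.1 *: \sum_(q <- delta 1) T q.1 q.2 p.2).
  apply: eq_bigr => p _.
  transitivity (\sum_(r <- tau p.1) \sum_(q <- delta (r.1 * r.2)) T q.1 q.2 p.2).
    apply: eq_bigr => r _; rewrite (deltaM (g := fun a k => T a k p.2)); last by solve_lin.
    by rewrite /Y exchange_big.
  have hl : lin (fun z => \sum_(q <- delta z) T q.1 q.2 p.2) by solve_lin.
  by rewrite -(lin_sum hl) tau_mul (linZ hl).
rewrite (eq_bigr (fun p => eps p.1 *: T 1 1 p.2)); last first.
  by move=> p _; rewrite (delta1 (g := fun a k => T a k p.2)) //; solve_lin.
exact: Delta_counitl.
Qed.

Lemma tau_coaction_l (G : A -> A -> H -> M) h : tril G ->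
  \sum_(r <- tau h) \sum_(q <- delta r.1) G q.1 r.2 q.2 =
  \sum_(p <- Delta h) \sum_(r <- tau p.2) G r.1 r.2 (S p.1).
Proof.
move=> hG3; have [g1 g2 g3] := hG3; have lS := lin_S.
pose K x k l := \sum_(r' <- tau k) G (x * r'.1) r'.2 l.
have hK : tril K by rewrite /K; solve_lin.
have E x y l : G x y l = \sum_(q <- delta y) K (x * q.1) q.2 l by exact: tau_chi3.
transitivity (\sum_(p <- Delta h) K 1 p.2 (S p.1)); last first.
  apply: eq_bigr => p _; rewrite -(chi_tau1 (g := fun x k => K x k (S p.1))); last by solve_lin.
  by apply: eq_bigr => r _; rewrite E.
transitivity (\sum_(r <- tau h) \sum_(q <- delta r.1) \sum_(q' <- delta r.2)
    K (q.1 * q'.1) q'.2 q.2).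
  by apply: eq_bigr => r _; apply: eq_bigr => q _; rewrite E.
have hT : tril (fun x k l => \sum_(p' <- Delta l) K x p'.2 (k * S p'.1)) by solve_lin.
have := tau_coaction_mul h hT; under [in RHS]eq_bigr do rewrite mul1r.
move=> <-; do 3 (apply: eq_bigr => ? _).
by rewrite (Delta_antipode_cancel_mulr (W := K _)) //; solve_lin.
Qed.

Lemma tau_coaction (W : A -> A -> H -> H -> M) h : quadril W ->
  \sum_(r <- tau h) \sum_(b1 <- delta r.1) \sum_(b3 <- delta r.2) W b1.1 b3.1 b1.2 b3.2 =
  \sum_(n <- Delta h) \sum_(o <- Delta n.2) \sum_(r <- tau o.1) W r.1 r.2 (S n.1) o.2.
Proof.
move=> hW; have [w1 w2 w3 w4] := hW; have lS := lin_S.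
rewrite (tau_coaction_l (G := fun a c k => \sum_(b3 <- delta c) W a b3.1 k b3.2));
  last by solve_lin.
apply: eq_bigr => n _.
by rewrite (tau_coaction_r (G := fun a b l => W a b (S n.1) l)) //; solve_lin.
Qed.

End TranslationCoaction.

Lemma delta_tau_conj (M : lmodType CC) (g : A -> H -> M) a h : bil g ->
  \sum_(r <- tau h) \sum_(b <- delta (r.1 * a * r.2)) g b.1 b.2 =
  \sum_(b <- delta a) \sum_(n <- Delta h) \sum_(o <- Delta n.2) \sum_(r <- tau o.1)
    g (r.1 * b.1 * r.2) (S n.1 * b.2 * o.2).
Proof.
move=> hg; have [g1 g2] := hg; have lS := lin_S.
transitivity (\sum_(r <- tau h) \sum_(b <- delta a) \sum_(b1 <- delta r.1)
    \sum_(b3 <- delta r.2) g (b1.1 * b.1 * b3.1) (b1.2 * b.2 * b3.2)).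
  apply: eq_bigr => r _.
  rewrite (deltaM (g := g)) //.
  rewrite (deltaM (g := fun x k => \sum_(b3 <- delta r.2) g (x * b3.1) (k * b3.2)));
    last by solve_lin.
  by rewrite exchange_big.
rewrite exchange_big /=; apply: eq_bigr => b _.
by rewrite (tau_coaction (W := fun x y k l => g (x * b.1 * y) (k * b.2 * l))) //; solve_lin.
Qed.

Lemma coaction_ES_antipode (M : lmodType CC) (T : A -> A -> H -> M) a a' : tril T ->
  \sum_(q <- delta a') \sum_(b <- delta q.1) \sum_(r <- tau q.2)
    \sum_(b' <- delta (r.1 * a * r.2)) T b.1 b'.1 (b.2 * b'.2) =
  \sum_(b <- delta a) \sum_(q <- delta a') \sum_(o <- Delta q.2) \sum_(r <- tau o.1)
    T q.1 (r.1 * b.1 * r.2) (b.2 * o.2).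
Proof.
move=> hT; have [t1 t2 t3] := hT; have lS := lin_S.
transitivity (\sum_(q <- delta a') \sum_(m <- Delta q.2) \sum_(r <- tau m.2)
    \sum_(b' <- delta (r.1 * a * r.2)) T q.1 b'.1 (m.1 * b'.2)).
  by apply: (delta_coassoc (T := fun u k l => \sum_(r <- tau l)
    \sum_(b' <- delta (r.1 * a * r.2)) T u b'.1 (k * b'.2))); solve_lin.
rewrite [RHS]exchange_big; apply: eq_bigr => q _ /=.
transitivity (\sum_(b <- delta a) \sum_(m <- Delta q.2) \sum_(n <- Delta m.2) \sum_(o <- Delta n.2)
    \sum_(r <- tau o.1) T q.1 (r.1 * b.1 * r.2) (m.1 * S n.1 * (b.2 * o.2))).
  rewrite exchange_big; apply: eq_bigr => m _.
  rewrite (delta_tau_conj (g := fun x k => T q.1 x (m.1 * k))); last by solve_lin.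
  by do 4 (apply: eq_bigr => ? _); rewrite !mulrA.
apply: eq_bigr => b _.
pose Z k l := \sum_(o <- Delta l) \sum_(r <- tau o.1) T q.1 (r.1 * b.1 * r.2) (k * (b.2 * o.2)).
rewrite (Delta_antipode_cancel (Z := Z)); last by rewrite /Z; solve_lin.
by apply: eq_bigr => o _; apply: eq_bigr => r _; rewrite mul1r.
Qed.

Notation inES := (inES delta).

Lemma inESE c : inES c -> forall (M : lmodType CC) (T : A -> A -> H -> M), tril T ->
  \sum_(p <- c) \sum_(q <- delta p.1) \sum_(r <- delta p.2) T q.1 r.1 (q.2 * r.2) =
  \sum_(p <- c) T p.1 p.2 1.
Proof.
move=> hc M T hT; have := hc M T hT.
rewrite big_flatten !big_map /=.
by under eq_bigr => p _ do rewrite big_allpairs_dep /=.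
Qed.

Lemma inESI c : (forall (M : lmodType CC) (T : A -> A -> H -> M), tril T ->
  \sum_(p <- c) \sum_(q <- delta p.1) \sum_(r <- delta p.2) T q.1 r.1 (q.2 * r.2) =
  \sum_(p <- c) T p.1 p.2 1) -> inES c.
Proof.
move=> h M T hT; rewrite /Defs.inES big_flatten !big_map /=.
under eq_bigr => p _ do rewrite big_allpairs_dep /=.
exact: h.
Qed.

Lemma inES_teq c d : teq2 c d -> inES c -> inES d.
Proof.
move=> cd hc; apply: inESI => M T hT; have [t1 t2 t3] := hT.
rewrite -(cd M (fun x y => \sum_(q <- delta x) \sum_(r <- delta y) T q.1 r.1 (q.2 * r.2)));
  last by solve_lin.
by rewrite (inESE hc hT) (cd M (fun x y => T x y 1)) //; solve_lin.
Qed.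

Lemma inES_nil : inES [::].
Proof. by apply: inESI => *; rewrite !big_nil. Qed.

Lemma inES_cat c d : inES c -> inES d -> inES (c ++ d).
Proof. by move=> hc hd; apply: inESI => M T hT; rewrite !big_cat (inESE hc hT) (inESE hd hT). Qed.

Lemma inES_tscale a c : inES c -> inES (tscale a c).
Proof.
move=> hc; apply: inESI => M T hT; have [t1 t2 t3] := hT; rewrite !big_map /=.
transitivity (\sum_(p <- c) \sum_(q <- delta p.1) \sum_(r <- delta p.2) a *: T q.1 r.1 (q.2 * r.2)).
  apply: eq_bigr => p _.
  have hl : lin (fun x => \sum_(q <- delta x) \sum_(r <- delta p.2) T q.1 r.1 (q.2 * r.2)).
    by solve_lin.
  by rewrite (linZ hl) scaler_sumr; apply: eq_bigr => q _; rewrite scaler_sumr.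
rewrite (inESE hc (T := fun u v k => a *: T u v k)); last by solve_lin.
by apply: eq_bigr => p _; rewrite (linZ (t1 _ _)).
Qed.

Lemma inES_flatten (cs : seq (seq (A * A))) : {in cs, forall c, inES c} -> inES (flatten cs).
Proof.
elim: cs => [|c cs IH] h /=; first exact: inES_nil.
by apply: inES_cat; [apply: h; rewrite inE eqxx | apply: IH => d hd; apply: h; rewrite inE hd orbT].
Qed.

Lemma inES_antipode e : inES e -> inES (ES_antipode delta tau e).
Proof.
move=> he; apply: inESI => M T hT; have [t1 t2 t3] := hT; have lS := lin_S.
rewrite /ES_antipode !big_flatten !big_map.
under eq_bigr => p _ do rewrite big_allpairs_dep /=.
under [RHS]eq_bigr => p _ do rewrite big_allpairs_dep /=.
pose Tr u v k := \sum_(c <- delta v) \sum_(r <- tau c.2) T c.1 (r.1 * u * r.2) k.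
have hTr : tril Tr by rewrite /Tr; solve_lin.
rewrite -(inESE he hTr); apply: eq_bigr => p _.
under eq_bigr do rewrite exchange_big /=.
rewrite coaction_ES_antipode //; apply: eq_bigr => b _; symmetry.
by apply: (delta_coassoc (T := fun x k l => \sum_(r <- tau k) T x (r.1 * b.1 * r.2) (b.2 * l)));
  solve_lin.
Qed.

Lemma inES_tau_contract c : inES c -> forall (M : lmodType CC) (t : A -> A -> A -> M), tril t ->
  \sum_(p <- c) \sum_(q <- delta p.1) \sum_(r <- tau q.2) t q.1 r.1 (r.2 * p.2) =
  \sum_(p <- c) t p.1 p.2 1.
Proof.
move=> hc M t ht; have [t1 t2 t3] := ht.
pose K u v k := \sum_(r' <- tau k) t u (v * r'.1) r'.2.
have hK : tril K by rewrite /K; solve_lin.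
have E u v w : t u v w = \sum_(q' <- delta w) K u (v * q'.1) q'.2 by exact: tau_chi.
transitivity (\sum_(p <- c) \sum_(q <- delta p.1) \sum_(s' <- delta p.2)
    K q.1 (1 * s'.1) (q.2 * s'.2)).
  apply: eq_bigr => p _; apply: eq_bigr => q _.
  rewrite -(chi_tau1 (g := fun x k => \sum_(s' <- delta p.2) K q.1 (x * s'.1) (k * s'.2)));
    last by solve_lin.
  apply: eq_bigr => r _; rewrite E (deltaM (g := fun a k => K q.1 (r.1 * a) k)); last by solve_lin.
  by apply: eq_bigr => s _; apply: eq_bigr => s' _; rewrite !mulrA.
rewrite (inESE hc (T := fun u v k => K u (1 * v) k)); last by solve_lin.
apply: eq_bigr => p _; rewrite E (delta1 (g := fun a k => K p.1 (p.2 * a) k)); last by solve_lin.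
by rewrite mulr1 mul1r.
Qed.

Lemma inES_coassoc e (M : lmodType CC) (Z : A -> H -> A -> H -> H -> M) : inES e ->
  (forall k y l h, lin (fun x => Z x k y l h)) ->
  (forall x y l h, lin (fun k => Z x k y l h)) ->
  (forall x k l h, lin (fun y => Z x k y l h)) ->
  (forall x k y h, lin (fun l => Z x k y l h)) ->
  (forall x k y l, lin (fun h => Z x k y l h)) ->
  \sum_(p <- e) \sum_(q <- delta p.1) \sum_(m <- Delta q.2) \sum_(s <- delta p.2)
     \sum_(o <- Delta s.2) Z q.1 m.1 s.1 o.1 (m.2 * o.2) =
  \sum_(p <- e) \sum_(q <- delta p.1) \sum_(s <- delta p.2) Z q.1 q.2 s.1 s.2 1.
Proof.
move=> he z1 z2 z3 z4 z5.
rewrite -(inESE he (T := fun u v k => \sum_(q <- delta u) \sum_(s <- delta v) Z q.1 q.2 s.1 s.2 k));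
  last by solve_lin.
apply: eq_bigr => p _; symmetry.
transitivity (\sum_(b <- delta p.1) \sum_(q <- delta b.1) \sum_(b' <- delta p.2)
   \sum_(s <- delta b'.1) Z q.1 q.2 s.1 s.2 (b.2 * b'.2)).
  by apply: eq_bigr => b _; rewrite exchange_big.
rewrite (delta_coassoc (T := fun u k l => \sum_(b' <- delta p.2) \sum_(s <- delta b'.1)
   Z u k s.1 s.2 (l * b'.2))); last by solve_lin.
apply: eq_bigr => q _; apply: eq_bigr => m _.
by rewrite (delta_coassoc (T := fun v k' l' => Z q.1 m.1 v k' (m.2 * l'))) //; solve_lin.
Qed.

Lemma inES_tau_coinv e (M : lmodType CC) (Z : A -> A -> A -> A -> A -> H -> M) : inES e ->
  (forall r s t x k, lin (fun q => Z q r s t x k)) ->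
  (forall q s t x k, lin (fun r => Z q r s t x k)) ->
  (forall q r t x k, lin (fun s => Z q r s t x k)) ->
  (forall q r s x k, lin (fun t => Z q r s t x k)) ->
  (forall q r s t k, lin (fun x => Z q r s t x k)) ->
  (forall q r s t x, lin (fun k => Z q r s t x k)) ->
  \sum_(p <- e) \sum_(q <- delta p.1) \sum_(r <- tau q.2) \sum_(s <- delta p.2) \sum_(t <- tau s.2)
     \sum_(b <- delta (r.2 * t.2)) Z q.1 r.1 s.1 t.1 b.1 b.2 =
  \sum_(p <- e) \sum_(q <- delta p.1) \sum_(r <- tau q.2) \sum_(s <- delta p.2) \sum_(t <- tau s.2)
     Z q.1 r.1 s.1 t.1 (r.2 * t.2) 1.
Proof.
move=> he z1 z2 z3 z4 z5 z6.
transitivity (\sum_(p <- e) \sum_(q <- delta p.1) \sum_(m <- Delta q.2) \sum_(r <- tau m.1)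
   \sum_(s <- delta p.2) \sum_(t <- tau s.2) \sum_(b' <- delta t.2)
   Z q.1 r.1 s.1 t.1 (r.2 * b'.1) (m.2 * b'.2)).
  apply: eq_bigr => p _; apply: eq_bigr => q _.
  rewrite -(tau_coaction_r (G := fun x y k => \sum_(s <- delta p.2) \sum_(t <- tau s.2)
     \sum_(b' <- delta t.2) Z q.1 x s.1 t.1 (y * b'.1) (k * b'.2))); last by solve_lin.
  apply: eq_bigr => r _.
  transitivity (\sum_(s <- delta p.2) \sum_(t <- tau s.2) \sum_(b <- delta r.2)
     \sum_(b' <- delta t.2) Z q.1 r.1 s.1 t.1 (b.1 * b'.1) (b.2 * b'.2)).
    apply: eq_bigr => s _; apply: eq_bigr => t _.
    by rewrite (deltaM (g := Z q.1 r.1 s.1 t.1)) //; solve_lin.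
  under eq_bigr => s _ do rewrite exchange_big.
  by rewrite exchange_big.
transitivity (\sum_(p <- e) \sum_(q <- delta p.1) \sum_(m <- Delta q.2) \sum_(s <- delta p.2)
   \sum_(o <- Delta s.2) \sum_(r <- tau m.1) \sum_(t <- tau o.1)
   Z q.1 r.1 s.1 t.1 (r.2 * t.2) (m.2 * o.2)).
  apply: eq_bigr => p _; apply: eq_bigr => q _; apply: eq_bigr => m _.
  transitivity (\sum_(r <- tau m.1) \sum_(s <- delta p.2) \sum_(o <- Delta s.2)
     \sum_(t <- tau o.1) Z q.1 r.1 s.1 t.1 (r.2 * t.2) (m.2 * o.2)).
    apply: eq_bigr => r _; apply: eq_bigr => s _.
    by rewrite (tau_coaction_r (G := fun x y k => Z q.1 r.1 s.1 x (r.2 * y) (m.2 * k)))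
      //; solve_lin.
  by rewrite exchange_big /=; apply: eq_bigr => s _; rewrite exchange_big.
rewrite (inES_coassoc (Z := fun x k y l h => \sum_(r <- tau k) \sum_(t <- tau l)
   Z x r.1 y t.1 (r.2 * t.2) h)) //; try by move=> *; solve_lin.
by apply: eq_bigr => p _; apply: eq_bigr => q _; rewrite exchange_big.
Qed.

Section Character.
Variables (phi : seq (A * A) -> CC) (F : A -> A).
Hypothesis hphi : is_character delta phi.
Hypothesis hF : Fphi_spec delta tau phi F.

Lemma Fphi_specE x : exists D : seq (seq (A * A) * A),
  [/\ {in D, forall d, inES d.1},
      (forall (M : lmodType CC) (t : A -> A -> A -> M), tril t ->
        \sum_(q <- delta x) \sum_(r <- tau q.2) t q.1 r.1 r.2 =
        \sum_(d <- D) \sum_(p <- d.1) t p.1 p.2 d.2) &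
      F x = \sum_(d <- D) phi d.1 *: d.2].
Proof.
have [D [hD hT hFx]] := hF x; exists D; split => // M t ht.
have := hT M t ht; rewrite !big_flatten !big_map /=.
under eq_bigr => q _ do rewrite big_map /=.
move=> ->; apply: eq_bigr => d _; by rewrite big_map.
Qed.

Lemma char_cat c d : inES c -> inES d -> phi (c ++ d) = phi c + phi d.
Proof. by move=> hc hd; rewrite -{1}[c]tscale1 (char_lin hphi) // mul1r. Qed.

Lemma char_nil : phi [::] = 0.
Proof.
have E := char_cat inES_nil inES_nil; rewrite cat0s in E.
by apply: (addrI (phi [::])); rewrite addr0 -E.
Qed.

Lemma char_flatten cs : (forall c, c \in cs -> inES c) -> phi (flatten cs) = \sum_(c <- cs) phi c.
Proof.
elim: cs => [|c cs IH] h /=; first by rewrite big_nil char_nil.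
have hc : inES c by apply: h; rewrite inE eqxx.
have hcs : forall d, d \in cs -> inES d by move=> d hd; apply: h; rewrite inE hd orbT.
by rewrite char_cat // ?IH // ?big_cons //; apply: inES_flatten.
Qed.

Section Projection.
Variable f : A -> CC.
Hypotheses (hf : lin f) (hf1 : f 1 = 1).

Definition proj_ES x y : seq (A * A) :=
  [seq (f (r.2 * y) *: q.1, r.1) | q <- delta x, r <- tau q.2].

Lemma sum_proj_ES (M : lmodType CC) (g : A -> A -> M) x y : (forall v, lin (fun u => g u v)) ->
  \sum_(p <- proj_ES x y) g p.1 p.2 =
  \sum_(q <- delta x) \sum_(r <- tau q.2) f (r.2 * y) *: g q.1 r.1.
Proof.
move=> hg; rewrite big_allpairs_dep; apply: eq_bigr => q _; apply: eq_bigr => r _ /=.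
exact: (linZ (hg _)).
Qed.

Lemma sum_proj_ESp (M : lmodType CC) (G : A * A -> M) x y : (forall v, lin (fun u => G (u, v))) ->
  \sum_(p <- proj_ES x y) G p = \sum_(q <- delta x) \sum_(r <- tau q.2) f (r.2 * y) *: G (q.1, r.1).
Proof.
move=> hg; rewrite big_allpairs_dep; apply: eq_bigr => q _; apply: eq_bigr => r _ /=.
exact: (linZ (hg _)).
Qed.

Lemma inES_proj_ES x y : inES (proj_ES x y).
Proof.
have [D [hD hT _]] := Fphi_specE x.
apply: (inES_teq (c := flatten [seq tscale (f (d.2 * y)) d.1 | d <- D])).
  apply: teq2I => M G hGG; have [g1 g2] := hGG.
  rewrite (sum_proj_ESp (G := G)) //.
  rewrite (hT M (fun u v w => f (w * y) *: G (u, v))); last by solve_lin.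
  rewrite big_flatten big_map; apply: eq_bigr => d _.
  rewrite (sum_tscale _ _ (G := G)) // scaler_sumr; apply: eq_bigr => p _.
  by case: p.
apply: inES_flatten => c /mapP [d dD ->]; apply: inES_tscale; exact: hD.
Qed.

Definition Phi x y := phi (proj_ES x y).

Lemma proj_ES_linl a x x' y :
  teq2 (proj_ES (a *: x + x') y) (tscale a (proj_ES x y) ++ proj_ES x' y).
Proof.
apply: teq2I => M G hGG; have [g1 g2] := hGG.
rewrite big_cat (sum_tscale _ _ (G := G)) //.
rewrite !(sum_proj_ESp (G := G)) //.
have hl : lin (fun x => \sum_(q <- delta x) \sum_(r <- tau q.2) f (r.2 * y) *: G (q.1, r.1)).
  by solve_lin.
by rewrite hl.
Qed.

Lemma proj_ES_linr a x y y' :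
  teq2 (proj_ES x (a *: y + y')) (tscale a (proj_ES x y) ++ proj_ES x y').
Proof.
apply: teq2I => M G hGG; have [g1 g2] := hGG.
rewrite big_cat /= (sum_tscale _ _ (G := G)) //.
rewrite !(sum_proj_ESp (G := G)) // scaler_sumr -big_split /=.
apply: eq_bigr => q _; rewrite scaler_sumr -big_split /=; apply: eq_bigr => r _.
by rewrite mulrDr -scalerAr hf scalerDl scalerA.
Qed.

Lemma bil_Phi : bil Phi.
Proof.
split=> [y|x] a u v; rewrite /Phi.
  rewrite (char_welldef hphi (inES_proj_ES _ _) (proj_ES_linl a u v y)).
  by rewrite (char_lin hphi) //; apply: inES_proj_ES.
rewrite (char_welldef hphi (inES_proj_ES _ _) (proj_ES_linr a x u v)).
by rewrite (char_lin hphi) //; apply: inES_proj_ES.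
Qed.

Lemma phi_Phi c : inES c -> phi c = \sum_(p <- c) Phi p.1 p.2.
Proof.
move=> hc.
have T : teq2 c (flatten [seq proj_ES p.1 p.2 | p <- c]).
  apply: teq2I => M G hGG; have [g1 g2] := hGG.
  rewrite big_flatten big_map.
  under [RHS]eq_bigr => p _ do rewrite (sum_proj_ESp (G := G)) //.
  rewrite (inES_tau_contract hc (t := fun u v w => f w *: G (u, v))); last by solve_lin.
  by apply: eq_bigr => p _; rewrite hf1 scale1r; case: p.
rewrite (char_welldef hphi hc T) char_flatten ?big_map //.
by move=> d /mapP [p _ ->]; apply: inES_proj_ES.
Qed.

Lemma F_Phi x : F x = \sum_(q <- delta x) \sum_(r <- tau q.2) Phi q.1 r.1 *: r.2.
Proof.
have [D [hD hT ->]] := Fphi_specE x; have hP := bil_Phi.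
rewrite (hT A (fun u v w => Phi u v *: w)); last by solve_lin.
rewrite big_seq [RHS]big_seq; apply: eq_bigr => d dD; rewrite (phi_Phi (hD _ dD)) scaler_suml.
by apply: eq_bigr.
Qed.

Lemma lin_F : lin F.
Proof.
have hP := bil_Phi.
have hl : lin (fun x => \sum_(q <- delta x) \sum_(r <- tau q.2) Phi q.1 r.1 *: r.2) by solve_lin.
by move=> a x y; rewrite !F_Phi; exact: hl.
Qed.

Lemma delta_F (M : lmodType CC) (g : A -> H -> M) y : bil g ->
  \sum_(b <- delta (F y)) g b.1 b.2 = \sum_(b <- delta y) g (F b.1) b.2.
Proof.
move=> hg; have [g1 g2] := hg; have hP := bil_Phi.
have hl : lin (fun z => \sum_(b <- delta z) g b.1 b.2) by solve_lin.
rewrite F_Phi (lin_sum hl).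
transitivity (\sum_(q <- delta y) \sum_(m <- Delta q.2) \sum_(r <- tau m.1)
    Phi q.1 r.1 *: g r.2 m.2).
  apply: eq_bigr => q _; rewrite (lin_sum hl).
  rewrite -(tau_coaction_r (G := fun x y' k => Phi q.1 x *: g y' k)); last by solve_lin.
  by apply: eq_bigr => r _; rewrite (linZ hl) scaler_sumr.
rewrite -(delta_coassoc (T := fun x k l => \sum_(r <- tau k) Phi x r.1 *: g r.2 l));
  last by solve_lin.
apply: eq_bigr => b _; rewrite F_Phi (lin_sum (g1 _)); apply: eq_bigr => q _.
rewrite (lin_sum (g1 _)); apply: eq_bigr => r _; by rewrite (linZ (g1 _)).
Qed.

Lemma inES_mapF e : inES e -> inES [seq (p.1, F p.2) | p <- e].
Proof.
move=> he; apply: inESI => M T hT; have [t1 t2 t3] := hT; have lF := lin_F.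
rewrite !big_map /=.
rewrite -(inESE he (T := fun u v k => T u (F v) k)); last by solve_lin.
apply: eq_bigr => p _; apply: eq_bigr => b _.
by rewrite (delta_F (g := fun u k => T b.1 u (b.2 * k))) //; solve_lin.
Qed.

Definition PhiS x y := \sum_(s <- delta y) \sum_(t <- tau s.2) Phi s.1 (t.1 * x * t.2).

Lemma bil_PhiS : bil PhiS.
Proof. have hP := bil_Phi; rewrite /PhiS; solve_lin. Qed.

Lemma phi_antipode g : inES g -> phi (ES_antipode delta tau g) = \sum_(v <- g) PhiS v.1 v.2.
Proof.
move=> hg; rewrite (phi_Phi (inES_antipode hg)) /ES_antipode big_flatten big_map.
by apply: eq_bigr => v _; rewrite big_allpairs_dep.
Qed.

Section Coproduct.
Variable M : lmodType CC.

Lemma sum_ES_coprod e (Q : A * A * A * A -> M) :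
  \sum_(t <- ES_coprod delta tau e) Q t =
  \sum_(p <- e) \sum_(q <- delta p.1) \sum_(r <- tau q.2) Q (q.1, r.1, r.2, p.2).
Proof.
rewrite /ES_coprod big_flatten big_map; apply: eq_bigr => p _.
by rewrite big_allpairs_dep.
Qed.

Lemma proj_ES_coprod_l (R : A -> A -> A -> A -> M) x z : quadril R ->
  \sum_(q <- delta x) \sum_(r <- tau q.2) \sum_(u <- proj_ES q.1 r.1) R u.1 u.2 r.2 z =
  \sum_(q <- delta x) \sum_(r <- tau q.2) R q.1 r.1 r.2 z.
Proof.
move=> hR; have [r1 r2 r3 r4] := hR.
transitivity (\sum_(q <- delta x) \sum_(q' <- delta q.1) \sum_(r <- tau q.2) \sum_(r' <- tau q'.2)
    f (r'.2 * r.1) *: R q'.1 r'.1 r.2 z).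
  apply: eq_bigr => q _.
  rewrite (eq_bigr (fun r => \sum_(q' <- delta q.1) \sum_(r' <- tau q'.2)
      f (r'.2 * r.1) *: R q'.1 r'.1 r.2 z)); last first.
    by move=> r _; rewrite (sum_proj_ES (g := fun a b => R a b r.2 z)).
  by rewrite exchange_big.
rewrite (delta_coassoc (T := fun a k l => \sum_(r <- tau l) \sum_(r' <- tau k)
    f (r'.2 * r.1) *: R a r'.1 r.2 z)); last by solve_lin.
apply: eq_bigr => q _.
under eq_bigr => p _ do rewrite exchange_big /=.
rewrite (tau_Delta (G := fun a b c => f b *: R q.1 a c z)) /=; last by solve_lin.
by apply: eq_bigr => r _; rewrite hf1 scale1r.
Qed.

Lemma proj_ES_coprod_r e (R : A -> A -> A -> A -> M) : inES e -> quadril R ->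
  \sum_(p <- e) \sum_(q <- delta p.1) \sum_(r <- tau q.2) \sum_(v <- proj_ES r.2 p.2)
    R q.1 r.1 v.1 v.2 =
  \sum_(p <- e) \sum_(q <- delta p.1) \sum_(r <- tau q.2) R q.1 r.1 r.2 p.2.
Proof.
move=> he hR; have [r1 r2 r3 r4] := hR.
transitivity (\sum_(p <- e) \sum_(q <- delta p.1) \sum_(m <- Delta q.2) \sum_(r <- tau m.1)
   \sum_(r' <- tau m.2) f (r'.2 * p.2) *: R q.1 r.1 r.2 r'.1).
  apply: eq_bigr => p _; apply: eq_bigr => q _.
  rewrite -(tau_coaction_r (G := fun a b k => \sum_(r' <- tau k) f (r'.2 * p.2) *: R q.1 a b r'.1));
    last by solve_lin.
  by apply: eq_bigr => r _; rewrite (sum_proj_ES (g := fun a b => R q.1 r.1 a b)).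
transitivity (\sum_(p <- e) \sum_(q <- delta p.1) \sum_(q'' <- delta q.1) \sum_(r <- tau q''.2)
   \sum_(r' <- tau q.2) f (r'.2 * p.2) *: R q''.1 r.1 r.2 r'.1).
  apply: eq_bigr => p _.
  by rewrite -(delta_coassoc (T := fun a k l => \sum_(r <- tau k) \sum_(r' <- tau l)
     f (r'.2 * p.2) *: R a r.1 r.2 r'.1)) //; solve_lin.
transitivity (\sum_(p <- e) \sum_(q <- delta p.1) \sum_(r' <- tau q.2) f (r'.2 * p.2) *:
   \sum_(q'' <- delta q.1) \sum_(r <- tau q''.2) R q''.1 r.1 r.2 r'.1).
  apply: eq_bigr => p _; apply: eq_bigr => q _.
  under eq_bigr => q'' _ do rewrite exchange_big /=.
  rewrite exchange_big /=; apply: eq_bigr => r' _.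
  by rewrite scaler_sumr; apply: eq_bigr => q'' _; rewrite scaler_sumr.
rewrite (inES_tau_contract he (t := fun u v w => f w *: \sum_(q'' <- delta u) \sum_(r <- tau q''.2)
   R q''.1 r.1 r.2 v)); last by solve_lin.
by apply: eq_bigr => p _; rewrite hf1 scale1r.
Qed.

Lemma proj_ES_coprod e (Q : A -> A -> A -> A -> M) : inES e -> quadril Q ->
  \sum_(p <- e) \sum_(q <- delta p.1) \sum_(r <- tau q.2) \sum_(u <- proj_ES q.1 r.1)
     \sum_(v <- proj_ES r.2 p.2) Q u.1 u.2 v.1 v.2 =
  \sum_(p <- e) \sum_(q <- delta p.1) \sum_(r <- tau q.2) Q q.1 r.1 r.2 p.2.
Proof.
move=> he hQ; have [q1 q2 q3 q4] := hQ.
rewrite -(proj_ES_coprod_r he hQ); apply: eq_bigr => p _.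
pose R0 a b c d :=
  \sum_(q' <- delta c) \sum_(r' <- tau q'.2) f (r'.2 * d) *: Q a b q'.1 r'.1.
transitivity (\sum_(q <- delta p.1) \sum_(r <- tau q.2) \sum_(u <- proj_ES q.1 r.1)
    R0 u.1 u.2 r.2 p.2).
  apply: eq_bigr => q _; apply: eq_bigr => r _; apply: eq_bigr => u _.
  by rewrite (sum_proj_ES (g := fun a b => Q u.1 u.2 a b)).
rewrite (proj_ES_coprod_l (R := R0)); last by rewrite /R0; solve_lin.
apply: eq_bigr => q _; apply: eq_bigr => r _.
by rewrite (sum_proj_ES (g := fun a b => Q q.1 r.1 a b)).
Qed.

End Coproduct.

Definition proj_coprod e :=
  [seq (proj_ES t.1.1.1 t.1.1.2, proj_ES t.1.2 t.2) | t <- ES_coprod delta tau e].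

Lemma decompCC_proj_coprod e : inES e -> decompCC delta (ES_coprod delta tau e) (proj_coprod e).
Proof.
move=> he; split.
  by move=> d /mapP [t _ ->]; split; apply: inES_proj_ES.
apply: teq4I => M Q hQ; have [q1 q2 q3 q4] := hQ.
apply: (etrans (sum_ES_coprod e Q)); symmetry.
rewrite big_flatten /proj_coprod big_map.
rewrite big_map /=. apply: (etrans (sum_ES_coprod e _)) => /=.
rewrite -(proj_ES_coprod he (Q := fun a b c d => Q (a, b, c, d))) //.
do 3 (apply: eq_bigr => ? _); by rewrite big_allpairs_dep.
Qed.

Section TestMap.
Variables (M : lmodType CC) (G : A * A -> M).
Hypothesis hGb : bil (fun u v => G (u, v)).

Lemma Phi_tau_coinv e : inES e ->
  \sum_(p <- e) \sum_(q <- delta p.1) \sum_(r <- tau q.2) \sum_(s <- delta p.2) \sum_(t <- tau s.2)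
     Phi s.1 (t.1 * (r.2 * t.2)) *: G (q.1, r.1) =
  \sum_(p <- e) \sum_(q <- delta p.1) \sum_(r <- tau q.2) \sum_(s <- delta p.2) \sum_(t <- tau s.2)
     (f (r.2 * t.2) * Phi s.1 t.1) *: G (q.1, r.1).
Proof.
move=> he; have hP := bil_Phi; have [g1 g2] := hGb.
pose Lam q1 r1 s1 t1 x k :=
  \sum_(r'' <- tau k) (f (x * r''.1) * Phi s1 (t1 * r''.2)) *: G (q1, r1).
have Lam_tau_chi q1 r1 s1 t1 w : Phi s1 (t1 * w) *: G (q1, r1) =
    \sum_(b <- delta w) Lam q1 r1 s1 t1 b.1 b.2.
  have := tau_chi (g := fun x y => (f x * Phi s1 (t1 * y)) *: G (q1, r1)) 1 w.
  rewrite hf1 mul1r => -> //; last by solve_lin.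
  by apply: eq_bigr => b _; apply: eq_bigr => r'' _; rewrite mul1r.
have Lam1 q1 r1 s1 t1 w : (f w * Phi s1 t1) *: G (q1, r1) = Lam q1 r1 s1 t1 w 1.
  have := tau_chi (g := fun x y => (f x * Phi s1 (t1 * y)) *: G (q1, r1)) w 1.
  rewrite mulr1 => -> //; last by solve_lin.
  rewrite (delta1 (g := fun x k => \sum_(r'' <- tau k)
    (f (w * x * r''.1) * Phi s1 (t1 * r''.2)) *: G (q1, r1))); last by solve_lin.
  by apply: eq_bigr => r'' _; rewrite mulr1.
transitivity (\sum_(p <- e) \sum_(q <- delta p.1) \sum_(r <- tau q.2) \sum_(s <- delta p.2)
   \sum_(t <- tau s.2) \sum_(b <- delta (r.2 * t.2)) Lam q.1 r.1 s.1 t.1 b.1 b.2).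
  by do 5 (apply: eq_bigr => ? _); rewrite Lam_tau_chi.
transitivity (\sum_(p <- e) \sum_(q <- delta p.1) \sum_(r <- tau q.2) \sum_(s <- delta p.2)
   \sum_(t <- tau s.2) Lam q.1 r.1 s.1 t.1 (r.2 * t.2) 1); last first.
  by do 5 (apply: eq_bigr => ? _); rewrite Lam1.
by apply: inES_tau_coinv => //; rewrite /Lam; solve_lin.
Qed.

Lemma coprod_PhiS e : inES e ->
  \sum_(p <- e) \sum_(q <- delta p.1) \sum_(r <- tau q.2) PhiS r.2 p.2 *: G (q.1, r.1) =
  \sum_(p <- e) G (p.1, F p.2).
Proof.
move=> he; have hP := bil_Phi; have [g1 g2] := hGb.
transitivity (\sum_(p <- e) \sum_(q <- delta p.1) \sum_(r <- tau q.2) \sum_(s <- delta p.2)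
     \sum_(t <- tau s.2) Phi s.1 (t.1 * (r.2 * t.2)) *: G (q.1, r.1)).
  do 3 (apply: eq_bigr => ? _); rewrite /PhiS scaler_suml; apply: eq_bigr => s _.
  by rewrite scaler_suml; apply: eq_bigr => t _; rewrite mulrA.
rewrite Phi_tau_coinv //.
transitivity (\sum_(p <- e) \sum_(q <- delta p.1) \sum_(r <- tau q.2)
    f (r.2 * F p.2) *: G (q.1, r.1)).
  apply: eq_bigr => p _; apply: eq_bigr => q _; apply: eq_bigr => r _.
  have hl : lin (fun z => f (r.2 * z)) by solve_lin.
  rewrite F_Phi (lin_sum hl) scaler_suml; apply: eq_bigr => s _.
  rewrite (lin_sum hl) scaler_suml; apply: eq_bigr => t _.
  by rewrite (linZ hl) scaleCCE mulrC.
have := inES_tau_contract (inES_mapF he) (t := fun u v w => f w *: G (u, v)) ltac:(solve_lin).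
rewrite !big_map /= => ->.
by apply: eq_bigr => p _; rewrite hf1 scale1r.
Qed.

Lemma sum_proj_coprod_antipode e : inES e ->
  \sum_(w <- flatten [seq tscale (phi (ES_antipode delta tau g.2)) g.1 | g <- proj_coprod e]) G w =
  \sum_(p <- e) G (p.1, F p.2).
Proof.
move=> he; have [g1 g2] := hGb; have hP := bil_Phi; have hPs := bil_PhiS.
rewrite -(coprod_PhiS he) big_flatten big_map /proj_coprod big_map.
transitivity (\sum_(t <- ES_coprod delta tau e) \sum_(u <- proj_ES t.1.1.1 t.1.1.2)
   \sum_(v <- proj_ES t.1.2 t.2) PhiS v.1 v.2 *: G u).
  apply: eq_bigr => t _ /=; rewrite (sum_tscale _ _ (G := G)) // (phi_antipode (inES_proj_ES _ _)).
  rewrite scaler_suml exchange_big /=; apply: eq_bigr => v _.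
  by rewrite scaler_sumr.
rewrite sum_ES_coprod -(proj_ES_coprod he (Q := fun a b c d => PhiS c d *: G (a, b)));
  last by solve_lin.
by rewrite /=; do 3 (apply: eq_bigr => ? _); apply: eq_bigr => -[? ?] _.
Qed.

Lemma sum_proj_coprod_Phi c : inES c ->
  \sum_(t <- ES_coprod delta tau c) \sum_(u <- proj_ES t.1.1.1 t.1.1.2)
     \sum_(v <- proj_ES t.1.2 t.2) Phi u.1 u.2 *: G (v.1, F v.2) =
  \sum_(p <- c) G (F p.1, F p.2).
Proof.
move=> hc; have [g1 g2] := hGb; have hP := bil_Phi; have lF := lin_F.
rewrite sum_ES_coprod (proj_ES_coprod hc (Q := fun a b c' d => Phi a b *: G (c', F d)));
  last by solve_lin.
apply: eq_bigr => p _; rewrite [F p.1]F_Phi (lin_sum (g1 _)); apply: eq_bigr => q _.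
by rewrite (lin_sum (g1 _)); apply: eq_bigr => r _; rewrite (linZ (g1 _)).
Qed.

End TestMap.

Lemma coinn_val_Ad c : inES c -> coinn_val delta tau phi c (Ad F c).
Proof.
move=> hc; exists [seq ((proj_ES t.1.1.1 t.1.1.2, proj_ES t.1.2 t.2),
  proj_coprod (proj_ES t.1.2 t.2)) | t <- ES_coprod delta tau c]; split.
- by rewrite -map_comp; exact: decompCC_proj_coprod.
- by move=> x /mapP [t _ ->]; apply: decompCC_proj_coprod; apply: inES_proj_ES.
apply: teq2I => M G hGG; rewrite big_flatten !big_map -(sum_proj_coprod_Phi hGG hc).
apply: eq_bigr => t _ /=; have [g1 _] := hGG.
rewrite (sum_tscale _ _ (G := G)) // (sum_proj_coprod_antipode hGG (inES_proj_ES _ _)).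
rewrite /Phi (phi_Phi (inES_proj_ES _ _)) scaler_suml; apply: eq_bigr => u _.
by rewrite scaler_sumr.
Qed.

End Projection.

End Character.

End GaloisObject.

Unset Implicit Arguments.

Theorem lemma5p7 (H A : algType CC) (Delta : H -> seq (H * H)) (eps : H -> CC)
    (S : H -> H) (delta : A -> seq (A * H)) (tau : H -> seq (A * A))
    (phi : seq (A * A) -> CC) (F : A -> A) :
  is_hopf Delta eps S ->
  is_galois_object Delta eps delta ->
  (forall h, teq2 (galois_map delta (tau h)) [:: (1, h)]) ->
  is_character delta phi ->
  Fphi_spec delta tau phi F ->
  forall c, inES delta c -> coinn_val delta tau phi c (Ad F c).
Proof.
move=> hH hG htau hphi hF c hc.
have [f [hf hf1]] := exists_lin_functional (oner_neq0 A).
exact: (coinn_val_Ad hH hG htau hphi hF hf hf1 hc).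
Qed.
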